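(* Let $R\ge 0$ and let $\lambda$ be a positive, increasing, smooth function on $[R,\infty)$. Let $g$ be a positive differentiable function on $[R,\infty)$ (with $R>0$ or $g$ defined on $(0,\infty)$) such that $X\mapsto\log g(e^X)$ is convex. Suppose there is $x_1$ with $g(x_1)=\lambda(x_1)$ and there is $x_2$ with $R\le x_2<x_1$ and $g(x_2)<\lambda(x_2)$. Then there is $x_0$ with $x_2<x_0\le x_1$, $g(x_0)=\lambda(x_0)$, and \[ \int_{x_0}^\infty g(x)\,\lambda(x)^{-1}\,dx\ge S(x_0,\lambda). \]
   Context: For a positive increasing smooth function $\lambda$ on $[R,\infty)$ and $x_0\ge R$, \[ S(x_0,\lambda)=\int_{x_0}^\infty\frac{\lambda(x_0)}{\lambda(x)}\left(\frac{x}{x_0}\right)^{x_0\lambda'(x_0)/\lambda(x_0)}dx . \] *)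

From HB Require Import structures.
From mathcomp Require Import all_boot all_order all_algebra.
From mathcomp Require Import all_classical all_reals all_analysis.
Set Implicit Arguments. Unset Strict Implicit. Unset Printing Implicit Defensive.
Import Order.TTheory GRing.Theory Num.Theory.
Import numFieldNormedType.Exports.
Local Open Scope classical_set_scope.
Local Open Scope ring_scope.

Definition smooth_on (R : realType) (f : R -> R) (A : set R) : Prop :=
  forall (n : nat) (x : R), A x -> derivable (derive1n n f) x 1.

(* S(x0, lam) = \int_{x0}^oo lam(x0)/lam(x) (x/x0)^(x0 lam'(x0)/lam(x0)) dx,
   as an extended real (nonnegative integrand, possibly +oo). *)
Definition S_fun (R : realType) (lam : R -> R) (x0 : R) : \bar R :=
  (\int[@lebesgue_measure R]_(x in `[x0, +oo[)
     ((lam x0 / lam x) * (x / x0) `^ (x0 * derive1 lam x0 / lam x0))%:E)%E.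

(* Let x0 be the first point after x2 where g meets lam.  In the logarithmic
   variable X = ln x, the function G = ln o g o exp is convex, lies below
   L = ln o lam o exp just left of X0 = ln x0, and equals it at X0.  So the
   chord slopes of G from X0 to the right are at least L'(X0) = a, where
   a = x0 lam'(x0) / lam(x0), i.e. g x >= lam x0 (x / x0)^a for x >= x0;
   dividing by lam x and integrating gives S(x0, lam) <= int g / lam. *)

From HB Require Import structures.
From mathcomp Require Import all_boot all_order all_algebra.
From mathcomp Require Import all_classical all_reals all_analysis.
From mathcomp Require Import ring lra.
Set Implicit Arguments.
Unset Strict Implicit.
Unset Printing Implicit Defensive.
Import Order.TTheory GRing.Theory Num.Theory.
Import numFieldNormedType.Exports.
Local Open Scope classical_set_scope.
Local Open Scope ring_scope.

(* The integral of a nonnegative function is a supremum over the simple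
   functions below it, so no measurability is needed here. *)
Lemma ge0_le_integral_nonmeas d (T : measurableType d) (R : realType)
    (mu : measure T R) (D : set T) (f1 f2 : T -> \bar R) :
  (forall x, D x -> 0 <= f1 x)%E -> (forall x, D x -> f1 x <= f2 x)%E ->
  (\int[mu]_(x in D) f1 x <= \int[mu]_(x in D) f2 x)%E.
Proof.
move=> f10 f12.
have f20 x : D x -> (0 <= f2 x)%E by move=> Dx; exact: le_trans (f10 _ Dx) (f12 _ Dx).
rewrite (ge0_integralE mu f10) (ge0_integralE mu f20).
apply: ereal_sup_le => _ [h /= hf <-]; exists h => //= x.
apply: le_trans (hf x) _; rewrite /patch; case: ifP => // /set_mem Dx; exact: f12.
Qed.

Section LogLogConvexity.
Context {R : realType}.

Lemma first_contact (f g : R -> R) (a b : R) : a < b ->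
  {within `[a, b], continuous f} -> {within `[a, b], continuous g} ->
  g a < f a -> g b = f b ->
  exists c, [/\ a < c, c <= b, g c = f c & forall y, a <= y < c -> g y < f y].
Proof.
move=> ab cf cg gfa gfb; pose phi := f \- g.
have cphi : {within `[a, b], continuous phi}.
  by move=> x; apply: cvgB; [exact: cf | exact: cg].
pose S := [set x | x \in `[a, b] /\ phi x <= 0].
have Sb : S b by split; [rewrite in_itv /= (ltW ab) lexx | rewrite /phi /= gfb subrr].
have hS : has_inf S by split; [exists b | exists a => y [/andP[]]].
set c := inf S.
have ac : a <= c by apply: lb_le_inf => [|y [/andP[]]] //; exists b.
have cb : c <= b by apply: ge_inf => //; case: hS.
have below y : a <= y < c -> 0 < phi y.
  move=> /andP[ay yc]; rewrite ltNge; apply/negP => py.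
  have : S y by split => //; rewrite in_itv /= ay (le_trans (ltW yc) cb).
  by move=> /(ge_inf hS.2); rewrite leNgt yc.
have phic : phi c <= 0.
  rewrite leNgt; apply/negP => pc.
  have cab : c \in `[a, b] by rewrite in_itv /= ac cb.
  have := cvgr_gt _ ((subspace_continuousP _ _).1 cphi c cab) _ pc.
  rewrite near_withinE => /(_ _) /nbhs_ballP[d d0 Hd].
  have [e [eab pe] ecd] := inf_adherent d0 hS.
  have ce : c <= e by apply: ge_inf => //; case: hS.
  move: pe; rewrite leNgt Hd //= /ball /= ler0_norm ?subr_le0 //.
  by rewrite opprB ltrBlDl.
have ac' : a < c.
  rewrite lt_neqAle ac andbT; apply/eqP => ca.
  by move: phic; rewrite -ca leNgt /phi /= subr_gt0 gfa.
have [z zac phiz] : exists2 z, z \in `[a, c] & phi z = 0.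
  apply: IVT; first exact: ltW.
    by apply: continuous_subspaceW cphi; apply: subset_itvl; rewrite bnd_simp.
  rewrite ge_min le_max phic orbT /=; apply/orP; left.
  by rewrite ltW // /phi /= subr_gt0.
have zc : z = c.
  apply/eqP; rewrite eq_le (itvP zac) /= leNgt; apply/negP => zc.
  by move: (below z); rewrite (itvP zac) zc phiz ltxx => /(_ isT).
exists c; split => //; first by apply/eqP; rewrite eq_sym -subr_eq0 -zc; apply/eqP.
by move=> y /below; rewrite /phi /= subr_gt0.
Qed.

Definition convex_on (G : R -> R) (A : set R) : Prop :=
  forall X Y t, A X -> A Y -> 0 <= t <= 1 ->
    G (t * X + (1 - t) * Y) <= t * G X + (1 - t) * G Y.

Lemma convex_on_slope_le (G : R -> R) (A : set R) (X Z Y : R) :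
  convex_on G A -> A X -> A Y -> X < Z < Y ->
  (G Z - G X) * (Y - Z) <= (G Y - G Z) * (Z - X).
Proof.
move=> cvx AX AY /andP[XZ ZY].
have XY := lt_trans XZ ZY.
have YX : 0 < Y - X by rewrite subr_gt0.
pose t := (Y - Z) / (Y - X).
have t01 : 0 <= t <= 1.
  by rewrite /t divr_ge0 ?subr_ge0 ?(ltW ZY) ?(ltW XY) //= ler_pdivrMr // mul1r lerB // ltW.
have := cvx X Y t AX AY t01.
have -> : t * X + (1 - t) * Y = Z by rewrite /t; field; rewrite gt_eqF.
have -> : 1 - t = (Z - X) / (Y - X) by rewrite /t; field; rewrite gt_eqF.
rewrite /t mulrAC [_ / _ * G Y]mulrAC -mulrDl ler_pdivlMr //.
nra.
Qed.

Lemma derive1_le_left_slope (f : R -> R) (x d s : R) :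
  derivable f x 1 -> 0 < d ->
  (forall y, x - d < y < x -> (f x - f y) / (x - y) <= s) -> derive1 f x <= s.
Proof.
move=> df d0 slope.
rewrite derive1E /derive cvg_at_leftE //.
apply: limr_le.
  apply: cvgP; apply: cvg_trans _ df; apply: cvg_app.
  by apply: within_subset => // h /lt_eqF ->.
near=> h.
have h0 : h < 0 by near: h; exact: nbhs_left_lt.
have hd : - d < h by near: h; apply: nbhs_left_gt; rewrite oppr_lt0.
have -> : h^-1 *: ((f \o shift x) h%:A - f x) = (f x - f (h + x)) / (x - (h + x)).
  rewrite /= -[h%:A]/(h * 1) mulr1 -[_ *: _]/(_ * _) (_ : x - (h + x) = - h); last by ring.
  by field; rewrite lt_eqF.
by apply: slope; apply/andP; split; lra.
Unshelve. all: end_near. Qed.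

(* Left difference quotients of L at X0 are bounded by the chord slopes of G
   ending at X0, which by convexity are at most the slope from X0 to Y. *)
Lemma convex_on_ge_tangent (G L : R -> R) (X2 X0 Y a : R) :
  X2 < X0 -> X0 <= Y -> convex_on G `]X2, +oo[ -> is_derive X0 1 L a ->
  G X0 = L X0 -> (forall X, X2 < X < X0 -> G X <= L X) ->
  G X0 + a * (Y - X0) <= G Y.
Proof.
move=> X20 X0Y cvx [dL <-] GL0 GL.
have [<-|X0Y'] := eqVneq X0 Y; first by rewrite subrr mulr0 addr0.
have {X0Y'}X0Y : X0 < Y by rewrite lt_neqAle X0Y' X0Y.
have u0 : 0 < Y - X0 by rewrite subr_gt0.
suff : derive1 L X0 <= (G Y - G X0) / (Y - X0).
  by rewrite derive1E ler_pdivlMr // => ?; lra.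
apply: (@derive1_le_left_slope L X0 (X0 - X2)) => // [|X XX]; first by rewrite subr_gt0.
have {}XX : X2 < X < X0 by apply/andP; split; lra.
have /andP[X2X XX0] := XX.
have := @convex_on_slope_le G _ X X0 Y cvx.
rewrite /= !in_itv /= !andbT X2X XX0 X0Y (lt_trans X20 X0Y) => /(_ isT isT isT) slope.
rewrite ler_pdivrMr ?subr_gt0 // mulrAC ler_pdivlMr //.
have := GL X XX; nra.
Qed.

Lemma is_derive_ln_comp_expR (f : R -> R) (x : R) :
  0 < x -> 0 < f x -> derivable f x 1 ->
  is_derive (ln x) 1 (@ln R \o f \o expR) (x * derive1 f x / f x).
Proof.
move=> x0 fx0 df.
have ex : expR (ln x) = x by rewrite lnK // posrE.
have dfe : is_derive (ln x) 1 (f \o expR) (derive1 f x * x).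
  by rewrite -[X in _ * X]ex; apply: is_derive1_comp; rewrite ex derive1E; exact: derivableP.
have fex0 : 0 < (f \o expR) (ln x) by rewrite /= ex.
rewrite (_ : x * _ / _ = ((f \o expR) (ln x))^-1 * (derive1 f x * x)); last first.
  by rewrite /= ex; field; rewrite gt_eqF.
exact: is_derive1_comp (is_derive1_ln fex0) dfe.
Qed.

Lemma loglog_convex_ge_powR (g lam : R -> R) (x2 x0 x : R) :
  0 < x2 -> x2 < x0 -> x0 <= x ->
  {in `]x2, +oo[, forall y, 0 < g y} -> {in `]x2, +oo[, forall y, 0 < lam y} ->
  convex_on (@ln R \o g \o expR) `]ln x2, +oo[ -> derivable lam x0 1 ->
  g x0 = lam x0 -> (forall y, x2 < y < x0 -> g y <= lam y) ->
  lam x0 * (x / x0) `^ (x0 * derive1 lam x0 / lam x0) <= g x.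
Proof.
move=> x2p x20 x0x gp lamp cvx dlam gl0 gl.
have x0p : 0 < x0 := lt_trans x2p x20.
have xp : 0 < x := lt_le_trans x0p x0x.
have pos y : x2 < y -> 0 < g y /\ 0 < lam y.
  by move=> y2; split; [apply: gp | apply: lamp]; rewrite in_itv /= y2.
have [gx0 lx0] := pos x0 x20.
have [gx _] := pos x (lt_le_trans x20 x0x).
have := @convex_on_ge_tangent (@ln R \o g \o expR) (@ln R \o lam \o expR)
  (ln x2) (ln x0) (ln x) _ _ _ cvx (is_derive_ln_comp_expR x0p lx0 dlam).
rewrite /= !lnK ?posrE // ltr_ln ?posrE // ler_ln ?posrE // gl0 => /(_ x20 x0x erefl).
have lnx2K : expR (ln x2) = x2 by rewrite lnK ?posrE.
have lnx0K : expR (ln x0) = x0 by rewrite lnK ?posrE.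
have below X : ln x2 < X < ln x0 -> ln (g (expR X)) <= ln (lam (expR X)).
  rewrite -ltr_expR -[X in _ && X]ltr_expR lnx2K lnx0K => /andP[y2 y0].
  have [gy ly] := pos _ y2.
  by rewrite ler_ln ?posrE // gl // y2.
move=> /(_ below); set a := x0 * _ / _ => tangent.
have -> : lam x0 * (x / x0) `^ a = expR (ln (lam x0) + a * (ln x - ln x0)).
  by rewrite expRD lnK ?posrE // /powR gt_eqF ?divr_gt0 // ln_div ?posrE.
by rewrite -[g x]lnK ?posrE // ler_expR.
Qed.

Lemma S_fun_le_integral (lam g : R -> R) (x0 : R) :
  {in `[x0, +oo[, forall y, 0 < lam y} ->
  (forall y, x0 <= y -> lam x0 * (y / x0) `^ (x0 * derive1 lam x0 / lam x0) <= g y) ->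
  (S_fun lam x0 <= \int[@lebesgue_measure R]_(x in `[x0, +oo[) (g x / lam x)%:E)%E.
Proof.
move=> lam_pos bound; apply: ge0_le_integral_nonmeas => y /[dup] /lam_pos ly;
  rewrite /= in_itv /= andbT => x0y; rewrite lee_fin.
- by rewrite mulr_ge0 ?powR_ge0 // divr_ge0 ?(ltW ly) // ltW // lam_pos // in_itv /= lexx.
- by rewrite mulrAC ler_wpM2r ?invr_ge0 ?(ltW ly) // bound.
Qed.
End LogLogConvexity.

Theorem lemma4p1 (R : realType) (R0 : R) (lam g : R -> R) (x1 x2 : R) :
  0 <= R0 ->
  (* lam positive, increasing, smooth on [R0, oo) *)
  (forall x, R0 <= x -> 0 < lam x) ->
  (forall x y, R0 <= x -> x <= y -> lam x <= lam y) ->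
  {within `[R0, +oo[, continuous lam} ->
  smooth_on lam `]R0, +oo[ ->
  (* g positive, differentiable on D = [R0, oo) /\ (0, oo) *)
  (forall x, 0 < x -> R0 <= x -> 0 < g x) ->
  {within [set x | 0 < x /\ R0 <= x], continuous g} ->
  (forall x, 0 < x -> R0 < x -> derivable g x 1) ->
  (* X |-> log g(e^X) convex on its domain *)
  (forall (X Y t : R), R0 <= expR X -> R0 <= expR Y -> 0 <= t <= 1 ->
     ln (g (expR (t * X + (1 - t) * Y)))
       <= t * ln (g (expR X)) + (1 - t) * ln (g (expR Y))) ->
  g x1 = lam x1 ->
  0 < x2 -> R0 <= x2 -> x2 < x1 -> g x2 < lam x2 ->
  exists x0 : R, [/\ x2 < x0, x0 <= x1, g x0 = lam x0 &
    (S_fun lam x0 <= \int[@lebesgue_measure R]_(x in `[x0, +oo[)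
                        (g x / lam x)%:E)%E].
Proof.
move=> _ lam_gt0 _ lam_cont lam_smooth g_gt0 g_cont _ g_loglog gl1 x2_gt0 R0x2 x21 gl2.
have R0_le y : x2 <= y -> R0 <= y := le_trans R0x2.
have [x0 [x20 x01 gl0 g_lt_lam]] : exists x0, [/\ x2 < x0, x0 <= x1, g x0 = lam x0 &
    forall y, x2 <= y < x0 -> g y < lam y].
  apply: first_contact x21 _ _ gl2 gl1.
  - apply: continuous_subspaceW lam_cont => y /=; rewrite !in_itv /= andbT.
    by move=> /andP[/R0_le].
  - apply: continuous_subspaceW g_cont => y /=; rewrite in_itv /= => /andP[y2 _].
    by split; [exact: lt_le_trans x2_gt0 y2 | exact: R0_le].
exists x0; split => //.
have pos y : x2 < y -> 0 < g y /\ 0 < lam y.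
  by move=> y2; split; [apply: g_gt0; [exact: lt_trans x2_gt0 y2|] | apply: lam_gt0];
    apply/R0_le/ltW.
have R0_exp z : ln x2 < z -> R0 <= expR z.
  by move=> z2; apply/R0_le/ltW; rewrite -[x2]lnK ?posrE // ltr_expR.
apply: S_fun_le_integral => [x|x x0x].
  by rewrite in_itv /= andbT => x0x; case: (pos x (lt_le_trans x20 x0x)).
have lam_x0 : derivable lam x0 1.
  by apply: (lam_smooth 0%N); rewrite /= in_itv /= andbT (le_lt_trans R0x2).
apply: loglog_convex_ge_powR x2_gt0 x20 x0x _ _ _ lam_x0 gl0 _.
- by move=> y; rewrite in_itv /= andbT => /pos[].
- by move=> y; rewrite in_itv /= andbT => /pos[].
- move=> X Y t; rewrite /= !in_itv /= !andbT => X2 Y2.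
  by apply: g_loglog; exact: R0_exp.
- by move=> z /andP[/ltW z2 z0]; apply/ltW/g_lt_lam; rewrite z2.
Qed.
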